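(* Let $(X,\tau)$ be a topological space and let $\delta$ be a quasi-proximity on $X$ compatible with $\tau$ (i.e. $\tau(\delta)=\tau$) such that $\mathcal{V}_\delta$ is transitive. Let $\mathcal{V}\in T(\tau)$ with $\mathcal{V}_\delta\subseteq\mathcal{V}$. Then $\mathcal{V}\in\pi(\delta)$ if and only if for every $N\in\tau$ with $U_N\in\mathcal{V}$ we have $N\in\mathcal{B}(\mathcal{V}_\delta)$.
   Context: Quasi-uniformities and quasi-proximities are in the sense of Fletcher–Lindgren. For a quasi-uniformity $\mathcal{V}$ on $X$, $\tau(\mathcal{V})$ and $\delta(\mathcal{V})$ denote the topology and the quasi-proximity induced by $\mathcal{V}$; $\tau(\delta)$ is the topology induced by a quasi-proximity $\delta$. A quasi-uniformity $\mathcal{V}$ on $(X,\tau)$ is compatible if $\tau(\mathcal{V})=\tau$; it is transitive if it has a base of transitive entourages ($U\circ U\subseteq U$). $T(\tau)$ denotes the set of all compatible transitive quasi-uniformities on $(X,\tau)$. For a quasi-proximity $\delta$, $\pi(\delta)=\{\mathcal{V}:\mathcal{V}$ a quasi-uniformity on $X$ with $\delta(\mathcal{V})=\delta\}$; it is nonempty and has a coarsest element, denoted $\mathcal{V}_\delta$, which is totally bounded (and the only totally bounded member of $\pi(\delta)$). For $N\subseteq X$, $U_N=(N\times N)\cup((X\setminus N)\times X)$. For a quasi-uniformity $\mathcal{V}$ compatible with $\tau$, $\mathcal{B}(\mathcal{V})=\{N\in\tau: U_N\in\mathcal{V}\}$; when $\mathcal{V}$ is totally bounded and transitive this is an l-base,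 i.e. a base for $\tau$ closed under finite unions and finite intersections and containing $\emptyset$ and $X$. *)

From Stdlib Require Import Classical.

Set Implicit Arguments.

Definition set (X : Type) := X -> Prop.
Definition relX (X : Type) := X -> X -> Prop.

Definition is_topology (X : Type) (tau : set X -> Prop) : Prop :=
  tau (fun _ => True) /\ tau (fun _ => False) /\
  (forall A B, tau A -> tau B -> tau (fun x => A x /\ B x)) /\
  (forall F : set X -> Prop, (forall A, F A -> tau A) ->
     tau (fun x => exists A, F A /\ A x)) /\
  (forall A B, (forall x, A x <-> B x) -> tau A -> tau B).

Definition comp (X : Type) (U W : relX X) : relX X :=
  fun x z => exists y, W x y /\ U y z.

Definition subrel (X : Type) (U W : relX X) : Prop := forall x y, U x y -> W x y.

Definition quasi_uniformity (X : Type) (V : relX X -> Prop) : Prop :=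
  V (fun _ _ => True) /\
  (forall U W, V U -> subrel U W -> V W) /\
  (forall U W, V U -> V W -> V (fun x y => U x y /\ W x y)) /\
  (forall U, V U -> forall x, U x x) /\
  (forall U, V U -> exists W, V W /\ subrel (comp W W) U).

Definition tau_qu (X : Type) (V : relX X -> Prop) : set X -> Prop :=
  fun G => forall x, G x -> exists U, V U /\ forall y, U x y -> G y.

Definition compatible (X : Type) (V : relX X -> Prop) (tau : set X -> Prop) :=
  forall G, tau_qu V G <-> tau G.

Definition transitive_qu (X : Type) (V : relX X -> Prop) : Prop :=
  forall U, V U -> exists W, V W /\ subrel W U /\ subrel (comp W W) W.

Definition in_T (X : Type) (tau : set X -> Prop) (V : relX X -> Prop) : Prop :=
  quasi_uniformity V /\ compatible V tau /\ transitive_qu V.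

Definition quasi_proximity (X : Type) (d : set X -> set X -> Prop) : Prop :=
  (forall A B C, d (fun x => A x \/ B x) C <-> (d A C \/ d B C)) /\
  (forall A B C, d A (fun x => B x \/ C x) <-> (d A B \/ d A C)) /\
  (forall A B, d A B -> (exists x, A x) /\ (exists x, B x)) /\
  (forall A B, (exists x, A x /\ B x) -> d A B) /\
  (forall A B, ~ d A B -> exists C, ~ d A C /\ ~ d (fun x => ~ C x) B).

(* Topology induced by a quasi-proximity: closure cl A = {x | {x} d A};
   G is open iff its complement is closed. *)
Definition tau_qp (X : Type) (d : set X -> set X -> Prop) : set X -> Prop :=
  fun G => forall x, d (fun y => y = x) (fun y => ~ G y) -> ~ G x.

Definition delta_qu (X : Type) (V : relX X -> Prop) : set X -> set X -> Prop :=
  fun A B => forall U, V U -> exists x y, A x /\ B y /\ U x y.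

Definition in_pi (X : Type) (d : set X -> set X -> Prop) (V : relX X -> Prop) : Prop :=
  quasi_uniformity V /\ forall A B, delta_qu V A B <-> d A B.

(* V_d : the coarsest element of pi(d), i.e. the intersection of all members
   of pi(d) (which is itself a member of pi(d) when d is a quasi-proximity). *)
Definition V_delta (X : Type) (d : set X -> set X -> Prop) : relX X -> Prop :=
  fun U => forall V, in_pi d V -> V U.

Definition U_N (X : Type) (N : set X) : relX X :=
  fun x y => (N x /\ N y) \/ ~ N x.

Definition B_of (X : Type) (tau : set X -> Prop) (V : relX X -> Prop) : set X -> Prop :=
  fun N => tau N /\ V (U_N N).

(* If V lies in pi(d), a U_N in V says that N is d-far from its complement,
   and the entourage of pairs leaving A x B for d-far A, B belongs to every
   member of pi(d), hence to V_d.  Conversely, V_d <= V gives d(V) <= d; and if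
   some U in V keeps A away from B, a transitive W <= U produces the open set
   N = W[A] with U_N in V, so U_N lies in V_d by hypothesis, which forces A
   and B to be d-far. *)
From Stdlib Require Import Classical.

Set Implicit Arguments.
Unset Strict Implicit.

Section QuasiUniformNearness.

Variable X : Type.
Implicit Types (A B N : set X) (U W : relX X) (V : relX X -> Prop)
  (d : set X -> set X -> Prop).

Definition apart A B : relX X := fun x y => ~ A x \/ ~ B y.

Definition image_rel W A : set X := fun y => exists x, A x /\ W x y.

Lemma delta_qu_apart V A B : delta_qu V A B -> ~ V (apart A B).
Proof.
  intros Hnear VAB. destruct (Hnear _ VAB) as [x [y [Ax [By [nAx | nBy]]]]]; tauto.
Qed.

Lemma not_delta_qu_apart V A B :
  (forall U W, V U -> subrel U W -> V W) -> ~ delta_qu V A B -> V (apart A B).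
Proof.
  intros Vup Hfar. apply not_all_ex_not in Hfar. destruct Hfar as [U HU].
  apply imply_to_and in HU. destruct HU as [VU HU].
  apply (Vup U); [exact VU |]. intros x y Uxy.
  apply NNPP. intros Hxy. apply HU. exists x, y. unfold apart in Hxy. tauto.
Qed.

Lemma V_delta_upward d U W : V_delta d U -> subrel U W -> V_delta d W.
Proof. intros HU UW V' HV'. exact (proj1 (proj2 (proj1 HV')) U W (HU V' HV') UW). Qed.

Lemma V_delta_apart d A B : ~ d A B -> V_delta d (apart A B).
Proof.
  intros Hfar V' HV'. destruct HV' as [[_ [Vup _]] HdV].
  apply not_delta_qu_apart; [exact Vup |]. intros Hnear. apply Hfar, HdV, Hnear.
Qed.

Lemma V_delta_apart_not_near d A B :
  (exists V, in_pi d V) -> V_delta d (apart A B) -> ~ d A B.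
Proof.
  intros [V' HV'] HAB Hnear. apply (delta_qu_apart (V := V') (A := A) (B := B)).
  - apply (proj2 HV'), Hnear.
  - exact (HAB V' HV').
Qed.

(* An empty pi(d) would make the empty relation a member of V_d. *)
Lemma pi_inhabited d V (x : X) :
  quasi_uniformity V -> (forall U, V_delta d U -> V U) -> exists V', in_pi d V'.
Proof.
  intros [_ [_ [_ [Vrefl _]]]] Hsub. apply NNPP. intros Hnone.
  assert (Hempty : V_delta d (fun _ _ => False)).
  { intros V' HV'. exfalso. apply Hnone. exists V'. exact HV'. }
  exact (Vrefl _ (Hsub _ Hempty) x).
Qed.

Lemma delta_qu_le d V A B :
  (forall U, V_delta d U -> V U) -> delta_qu V A B -> d A B.
Proof.
  intros Hsub Hnear. apply NNPP. intros Hfar.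
  exact (delta_qu_apart Hnear (Hsub _ (V_delta_apart Hfar))).
Qed.

Lemma U_N_complement_apart N : subrel (apart N (fun y => ~ N y)) (U_N N).
Proof. intros x y [nNx | nnNy]; unfold U_N; [right | apply NNPP in nnNy]; tauto. Qed.

Lemma U_N_sub_apart N A B :
  (forall x, A x -> N x) -> (forall y, N y -> ~ B y) -> subrel (U_N N) (apart A B).
Proof.
  intros AN NB x y [[_ Ny] | nNx]; [right; exact (NB y Ny) | left; auto].
Qed.

Lemma tau_qu_image V W A : V W -> subrel (comp W W) W -> tau_qu V (image_rel W A).
Proof.
  intros VW Wtr y [x [Ax Wxy]]. exists W. split; [exact VW |].
  intros z Wyz. exists x. split; [exact Ax |]. apply Wtr. exists y. tauto.
Qed.

Lemma subrel_U_N_image W A : subrel (comp W W) W -> subrel W (U_N (image_rel W A)).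
Proof.
  intros Wtr y z Wyz. destruct (classic (image_rel W A y)) as [Ny | nNy].
  - left. split; [exact Ny |]. destruct Ny as [x [Ax Wxy]].
    exists x. split; [exact Ax |]. apply Wtr. exists y. tauto.
  - right. exact nNy.
Qed.

Lemma in_pi_U_N d V N : in_pi d V -> V (U_N N) -> V_delta d (U_N N).
Proof.
  intros [_ HdV] VN. apply (V_delta_upward (U := apart N (fun y => ~ N y))).
  - apply V_delta_apart. intros Hnear. apply HdV in Hnear.
    destruct (Hnear _ VN) as [x [y [Nx [nNy [[_ Ny] | nNx]]]]]; tauto.
  - apply U_N_complement_apart.
Qed.

Lemma near_delta_qu tau d V A B :
  quasi_proximity d -> in_T tau V -> (forall U, V_delta d U -> V U) ->
  (forall N, tau N -> V (U_N N) -> V_delta d (U_N N)) ->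
  d A B -> delta_qu V A B.
Proof.
  intros [_ [_ [Hne _]]] [Hqu [HcV HtV]] Hsub HB Hnear.
  destruct (Hne A B Hnear) as [[a _] _].
  pose proof Hqu as [_ [Vup [_ [Vrefl _]]]].
  apply NNPP. intros Hfar.
  destruct (HtV _ (not_delta_qu_apart Vup Hfar)) as [W [VW [WAB Wtr]]].
  assert (HN : tau (image_rel W A)) by exact (proj1 (HcV _) (tau_qu_image VW Wtr)).
  assert (VN : V (U_N (image_rel W A))) by exact (Vup W _ VW (subrel_U_N_image A Wtr)).
  apply (V_delta_apart_not_near (pi_inhabited a Hqu Hsub)) in Hnear; [exact Hnear |].
  apply (V_delta_upward (HB _ HN VN)). apply U_N_sub_apart.
  - intros x Ax. exists x. split; [exact Ax | exact (Vrefl W VW x)].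
  - intros y [x [Ax Wxy]] By. destruct (WAB x y Wxy); tauto.
Qed.

End QuasiUniformNearness.

Theorem lemma2p1 (X : Type) (tau : set X -> Prop) (d : set X -> set X -> Prop)
  (Htop : is_topology tau)
  (Hqp : quasi_proximity d)
  (Hcomp : forall G, tau_qp d G <-> tau G)
  (Htrans : transitive_qu (V_delta d))
  (V : relX X -> Prop)
  (HV : in_T tau V)
  (Hsub : forall U, V_delta d U -> V U) :
  in_pi d V <-> (forall N, tau N -> V (U_N N) -> B_of tau (V_delta d) N).
Proof.
  split.
  - intros Hpi N HN VN. split; [exact HN | exact (in_pi_U_N Hpi VN)].
  - intros HB. split; [exact (proj1 HV) |]. intros A B. split.
    + apply delta_qu_le, Hsub.
    + apply (near_delta_qu Hqp HV Hsub). intros N HN VN. exact (proj2 (HB N HN VN)).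
Qed.
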